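(* Let $x$ be a non-negative integer, $w$ a positive integer, and let $N_c$ be the least period of the sequence $(T_n^i(x)\bmod p^w)_{i\ge0}$. If $N_c\ge p^2$, then for every integer $k\ge w$ the least period of the sequence $(T_n^i(x)\bmod p^k)_{i\ge0}$ equals $N_c\cdot p^{k-w}$.
   Context: $p$ is a prime with $p>3$ and $n>1$ is an integer with $\gcd(n,p)=\gcd(n,p^2-1)=1$ (so $T_n$ permutes $\mathbb{Z}_{p^j}$ for all $j\ge1$). $T_n(x)\in\mathbb{Z}[x]$ is the Chebyshev polynomial of the first kind: $T_0=1$, $T_1=x$, $T_d=2xT_{d-1}-T_{d-2}$. $T_n^i$ is the $i$-fold composition of $T_n$ ($T_n^0(x)=x$). The least period of $(T_n^i(x)\bmod p^j)_{i\ge0}$ is the least positive integer $N$ with $T_n^N(x)\equiv x\pmod{p^j}$. *)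

From HB Require Import structures.
From mathcomp Require Import all_boot all_order all_algebra.
Set Implicit Arguments. Unset Strict Implicit. Unset Printing Implicit Defensive.
Import Order.TTheory GRing.Theory Num.Theory.
Local Open Scope ring_scope.

(* Chebyshev polynomials of the first kind over int:
   cheb_pair d = (T_d, T_{d+1}), with T_0 = 1, T_1 = X,
   T_{d} = 2 X T_{d-1} - T_{d-2}. *)
Fixpoint cheb_pair (d : nat) : {poly int} * {poly int} :=
  match d with
  | 0 => (1, 'X)
  | d'.+1 => let: (a, b) := cheb_pair d' in (b, 2%:R * 'X * b - a)
  end.

Definition chebT (d : nat) : {poly int} := (cheb_pair d).1.

Definition chebIter (n i : nat) (x : int) : int := iter i (fun y => (chebT n).[y]) x.

Definition least_period (n : nat) (x : int) (m : nat) (N : nat) : Prop :=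
  (0 < N)%N /\ (chebIter n N x == x %[mod (m%:Z)])%Z /\
  forall M : nat, (0 < M)%N -> (M < N)%N -> ~~ (chebIter n M x == x %[mod (m%:Z)])%Z.

From mathcomp Require Import all_boot all_order all_algebra finfield.
From mathcomp Require Import ring zify.
Set Implicit Arguments. Unset Strict Implicit. Unset Printing Implicit Defensive.
Import Order.TTheory GRing.Theory Num.Theory.
Local Open Scope ring_scope.

(* Let N be the least period of x modulo p^j, write T^N(x) - x = p^j u with
   p not dividing u, and let A = (T^N)'(x) be the multiplier of the cycle.
   Expanding T^(N t) to first order around x gives
     T^(N t)(x) - x = p^j u (1 + A + ... + A^(t-1))   (mod p^(2j)).
   Hence when j >= 2 and A = 1 (mod p) the period modulo p^(j+1) is N p, the
   power p^(j+1) divides T^(N p)(x) - x exactly, and the new multiplier is again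
   1 mod p: from then on the period is multiplied by p at every level.  Before
   this regime is reached the period stays at most p (p - 1): modulo p it is at
   most p - 1, because a longer cycle cannot visit the class of the fixed point
   1 of T_n, and the first level at which it grows multiplies it by at most p,
   after which the multiplier is 1 mod p.  So a period N_c >= p^2 modulo p^w is
   already in the regime of growth by p. *)

Lemma dvdz_mul_sub (m a b c d : int) :
  (m %| a - b)%Z -> (m %| c - d)%Z -> (m %| a * c - b * d)%Z.
Proof.
move=> mab mcd; have -> : a * c - b * d = (a - b) * c + b * (c - d) by ring.
by rewrite rpredD ?(dvdz_mulr _ mab) ?(dvdz_mull _ mcd).
Qed.

Lemma horner_taylor1 (P : {poly int}) (y h : int) :
  (h ^+ 2 %| P.[y + h] - P.[y] - P^`().[y] * h)%Z.
Proof.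
elim/poly_ind: P => [|Q c /dvdzP[k Hk]].
  by rewrite deriv0 !horner0 mul0r !subr0 dvdz0.
rewrite derivMXaddC !hornerMXaddC hornerD hornerM hornerX.
have -> : Q.[y + h] = k * h ^+ 2 + Q.[y] + Q^`().[y] * h by rewrite -Hk; ring.
by apply/dvdzP; exists (Q^`().[y] + k * (y + h)); ring.
Qed.

Lemma horner_dvd_sub (P : {poly int}) (m a b : int) :
  (m %| a - b)%Z -> (m %| P.[a] - P.[b])%Z.
Proof.
move=> mab; have := horner_taylor1 P b (a - b); rewrite subrKC => taylor.
have -> : P.[a] - P.[b] = P.[a] - P.[b] - P^`().[b] * (a - b) + P^`().[b] * (a - b)
  by ring.
by rewrite rpredD ?dvdz_mull // (dvdz_trans _ taylor) ?dvdz_exp.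
Qed.

Definition piter (P : {poly int}) (N : nat) : int -> int := iter N (horner P).

(* By the chain rule, multiplier P N y is the derivative of the N-th iterate of
   P at y. *)
Definition multiplier (P : {poly int}) (N : nat) (y : int) : int :=
  \prod_(i < N) P^`().[piter P i y].

Section PolyIteration.

Variable P : {poly int}.

Lemma piterS N y : piter P N.+1 y = P.[piter P N y].
Proof. by []. Qed.

Lemma piterD M N y : piter P (M + N) y = piter P M (piter P N y).
Proof. exact: iterD. Qed.

Lemma multiplierS N y :
  multiplier P N.+1 y = multiplier P N y * P^`().[piter P N y].
Proof. by rewrite /multiplier big_ord_recr. Qed.

Lemma multiplierD M N y :
  multiplier P (M + N) y = multiplier P M (piter P N y) * multiplier P N y.
Proof.
elim: M => [|M IH]; first by rewrite /multiplier big_ord0 mul1r.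
by rewrite addSn !multiplierS IH piterD mulrAC.
Qed.

Lemma piter_dvd_sub N (m a b : int) :
  (m %| a - b)%Z -> (m %| piter P N a - piter P N b)%Z.
Proof. by move=> mab; elim: N => // N; apply: horner_dvd_sub. Qed.

Lemma multiplier_dvd_sub N (m a b : int) :
  (m %| a - b)%Z -> (m %| multiplier P N a - multiplier P N b)%Z.
Proof.
move=> mab; elim: N => [|N IH]; first by rewrite /multiplier !big_ord0 subrr.
by rewrite !multiplierS dvdz_mul_sub // horner_dvd_sub // piter_dvd_sub.
Qed.

Lemma piter_taylor1 N (y h : int) :
  (h ^+ 2 %| piter P N (y + h) - piter P N y - multiplier P N y * h)%Z.
Proof.
elim: N => [|N /dvdzP[k IH]].
  by rewrite /multiplier big_ord0 /= mul1r [y + h]addrC addrK subrr.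
rewrite !piterS multiplierS.
set Y := piter P N y; set M := multiplier P N y; set d := M * h + k * h ^+ 2.
have -> : piter P N (y + h) = Y + d by rewrite /d -IH; ring.
have /dvdzP[r Hr] := horner_taylor1 P Y d.
have -> : P.[Y + d] = r * d ^+ 2 + P.[Y] + P^`().[Y] * d by rewrite -Hr; ring.
by apply/dvdzP; exists (r * (M + k * h) ^+ 2 + P^`().[Y] * k); rewrite /d; ring.
Qed.

End PolyIteration.

Lemma geom_sumS (R : pzSemiRingType) (a : R) t :
  \sum_(i < t.+1) a ^+ i = 1 + a * \sum_(i < t) a ^+ i.
Proof. by rewrite big_ord_recl expr0 mulr_sumr; under eq_bigr do rewrite exprS. Qed.

Section Periods.

Variables (P : {poly int}) (x : int).

Definition returns (m : int) (N : nat) := (m %| piter P N x - x)%Z.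

Definition is_least_period (m : int) (N : nat) :=
  [/\ (0 < N)%N, returns m N & forall M, (0 < M)%N -> (M < N)%N -> ~~ returns m M].

Lemma returns_dvd (d m : int) N : (d %| m)%Z -> returns m N -> returns d N.
Proof. exact: dvdz_trans. Qed.

Lemma returns_exp_le (d : int) i j N :
  (i <= j)%N -> returns (d ^+ j) N -> returns (d ^+ i) N.
Proof. by move=> ij; apply: returns_dvd; apply: dvdz_exp2l. Qed.

Lemma returns_mul m N t : returns m N -> returns m (N * t).
Proof.
move=> retN; elim: t => [|t IH]; first by rewrite muln0 /returns subrr dvdz0.
rewrite /returns mulnS piterD -(subrK (piter P N x) (piter P N _)) -addrA.
by rewrite rpredD // piter_dvd_sub.
Qed.

Lemma multiplier_mul m N t :
  returns m N -> (m %| multiplier P (N * t) x - multiplier P N x ^+ t)%Z.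
Proof.
move=> retN; elim: t => [|t IH]; first by rewrite muln0 /multiplier big_ord0 subrr.
rewrite mulnS multiplierD exprS dvdz_mul_sub // multiplier_dvd_sub //.
exact: returns_mul.
Qed.

(* Each further block of N steps multiplies the accumulated defect q * u by the
   multiplier, up to a multiple of q^2. *)
Lemma returns_geom N (q u : int) t : piter P N x - x = q * u ->
  (q ^+ 2 %| piter P (N * t) x - x - q * u * \sum_(i < t) multiplier P N x ^+ i)%Z.
Proof.
move=> defN; elim: t => [|t /dvdzP[k IH]].
  by rewrite muln0 big_ord0 /= mulr0 !subrr.
rewrite mulnS piterD geom_sumS.
set y := piter P (N * t) x; set A := multiplier P N x; set S := \sum_(i < t) A ^+ i.
have -> : y = x + (q * u * S + k * q ^+ 2) by rewrite -IH; ring.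
set h := q * u * S + k * q ^+ 2.
have /dvdzP[r Hr] := piter_taylor1 P N x h.
have -> : piter P N (x + h) = r * h ^+ 2 + (x + q * u) + A * h by rewrite -defN -Hr; ring.
by apply/dvdzP; exists (A * k + r * (u * S + k * q) ^+ 2); rewrite /h; ring.
Qed.

Lemma least_period_dvd m N M : is_least_period m N -> returns m M -> (N %| M)%N.
Proof.
move=> [N_gt0 retN minN] retM.
have defM : M = (M %% N + N * (M %/ N))%N by rewrite mulnC addnC -divn_eq.
have retR : returns m (M %% N).
  have := returns_mul (M %/ N) retN; rewrite /returns -rpredN opprB.
  move=> /(piter_dvd_sub P (M %% N)); rewrite -piterD -defM => retRM.
  have -> : piter P (M %% N) x - x = piter P (M %% N) x - piter P M x + (piter P M x - x)
    by ring.
  exact: rpredD.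
case: (posnP (M %% N)) => [R0 | R_gt0]; first by rewrite /dvdn R0.
by have := minN _ R_gt0 (ltn_pmod M N_gt0); rewrite retR.
Qed.

Lemma least_period_unique m N N' :
  is_least_period m N -> is_least_period m N' -> N = N'.
Proof.
move=> lpN lpN'; have [_ retN _] := lpN; have [_ retN' _] := lpN'.
by apply/eqP; rewrite eqn_dvd (least_period_dvd lpN) // (least_period_dvd lpN').
Qed.

Lemma least_period_exists m M :
  (0 < M)%N -> returns m M -> exists N, is_least_period m N.
Proof.
move=> M_gt0 retM; have exP : exists K, (0 < K)%N && returns m K.
  by exists M; rewrite M_gt0.
case: (ex_minnP exP) => N /andP[N_gt0 retN] minN; exists N; split=> // K K_gt0.
by apply: contraTN => retK; rewrite -leqNgt minN // K_gt0.
Qed.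

Lemma least_period_lift (m m' : int) N :
  (m %| m')%Z -> is_least_period m N -> returns m' N -> is_least_period m' N.
Proof.
move=> mm' [N_gt0 _ minN] retN; split=> // M M_gt0 MN.
by apply: contra (minN M M_gt0 MN); apply: returns_dvd.
Qed.

Lemma least_period_inj m N i k : is_least_period m N ->
  (i < N)%N -> (k < N)%N -> (m %| piter P k x - piter P i x)%Z -> i = k.
Proof.
move=> [N_gt0 retN minN]; wlog ik : i k / (i <= k)%N => [hw iN kN mik|].
  case/orP: (leq_total i k) => [/hw|/hw ki]; first exact.
  by symmetry; apply: ki => //; rewrite -opprB rpredN.
move=> iN kN mik; apply/eqP; rewrite eqn_leq ik /=; apply: contraT; rewrite -ltnNge => ki.
have: returns m (N - k + i).
  rewrite /returns piterD.
  have -> : piter P (N - k) (piter P i x) - x = piter P (N - k) (piter P i x) -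
      piter P (N - k) (piter P k x) + (piter P N x - x).
    by rewrite -[piter P (N - k) (piter P k x)]piterD subnK ?(ltnW kN) //; ring.
  by rewrite rpredD // piter_dvd_sub // -opprB rpredN.
have R_gt0 : (0 < N - k + i)%N by lia.
have RN : (N - k + i < N)%N by lia.
by rewrite (negbTE (minN _ R_gt0 RN)).
Qed.

(* A fixed point c of P attracts every orbit meeting its class mod p, so the
   residues of a cycle of length N > 1 are N distinct classes other than c. *)
Lemma least_period_le_prime (c : int) (p N : nat) :
  P.[c] = c -> prime p -> is_least_period p N -> (N <= p.-1)%N.
Proof.
move=> Pc p_pr lpN; have [N_gt0 retN minN] := lpN; have p_gt1 := prime_gt1 p_pr.
case: (leqP N 1) => [N_le1 | N_gt1]; first lia.
have p_neq0 : p%:Z != 0 by rewrite eqz_nat -lt0n ltnW.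
pose r (y : int) := `|(y %% p)%Z|%N.
have r_lt y : (r y < p)%N by rewrite -ltz_nat gez0_abs ?modz_ge0 // ltz_mod.
have r_eq a b : (r a == r b) = (p %| a - b)%Z.
  by rewrite -eqz_nat !gez0_abs ?modz_ge0 // eqz_mod_dvd.
have piter_c k : piter P k c = c by elim: k => // k IH; rewrite piterS IH.
have avoid i : (i < N)%N -> r (piter P i x) != r c.
  move=> iN; rewrite r_eq; apply: contra (minN 1%N isT N_gt1) => ic.
  have xc : (p %| x - c)%Z.
    have := piter_dvd_sub P (N - i) ic; rewrite piter_c -piterD subnK ?(ltnW iN) // => Nc.
    have -> : x - c = piter P N x - c - (piter P N x - x) by ring.
    exact: rpredB.
  rewrite /returns (_ : piter P 1 x - x = P.[x] - P.[c] - (x - c)).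
    by rewrite rpredB // horner_dvd_sub.
  by rewrite Pc /=; ring.
have res_uniq : uniq [seq r (piter P i x) | i <- iota 0 N].
  rewrite map_inj_in_uniq ?iota_uniq // => i k.
  rewrite !mem_iota add0n => /andP[_ iN] /andP[_ kN] /eqP; rewrite r_eq.
  by move/(least_period_inj lpN kN iN).
have res_sub : {subset [seq r (piter P i x) | i <- iota 0 N] <= rem (r c) (iota 0 p)}.
  move=> y /mapP[i]; rewrite mem_iota add0n => /andP[_ iN] ->.
  by rewrite (mem_rem_uniq _ (iota_uniq 0 p)) inE avoid // mem_iota r_lt.
have := uniq_leq_size res_uniq res_sub.
by rewrite size_map size_iota size_rem ?mem_iota ?r_lt // size_iota.
Qed.

End Periods.

Lemma geom_sum_dvd_sub (m A : int) t :
  (m %| A - 1)%Z -> (m %| \sum_(i < t) A ^+ i - t%:Z)%Z.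
Proof.
move=> mA; elim: t => [|t IH]; first by rewrite big_ord0 subrr.
have -> : \sum_(i < t.+1) A ^+ i - t.+1%:Z =
    (A - 1) * \sum_(i < t) A ^+ i + (\sum_(i < t) A ^+ i - t%:Z).
  by rewrite geom_sumS intS; ring.
by rewrite rpredD // dvdz_mulr.
Qed.

Lemma dvdz_geom_sum (m A : int) t :
  (m %| A - 1)%Z -> (m %| \sum_(i < t) A ^+ i)%Z = (m %| t%:Z)%Z.
Proof.
move=> mA; rewrite -[\sum_(i < t) _](subrK t%:Z) rpredDl //.
exact: geom_sum_dvd_sub.
Qed.

(* Sum_(i<p) A^i - p = (A - 1) * Sum_(i<p) Sum_(k<i) A^k, and the inner sum is
   congruent to 'C(p, 2) mod p, which p divides when p is odd. *)
Lemma geom_sum_prime (p : nat) (A : int) : prime p -> (2 < p)%N ->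
  (p%:Z %| A - 1)%Z -> (p%:Z ^+ 2 %| \sum_(i < p) A ^+ i - p%:Z)%Z.
Proof.
move=> p_pr p_gt2 pA.
have -> : \sum_(i < p) A ^+ i - p%:Z = (A - 1) * \sum_(i < p) \sum_(k < i) A ^+ k.
  have -> : p%:Z = \sum_(i < p) 1 by rewrite sumr_const card_ord natz.
  rewrite mulr_sumr -sumrB.
  by apply: eq_bigr => i _; rewrite subrX1.
rewrite expr2 dvdz_mul //.
have -> : \sum_(i < p) \sum_(k < i) A ^+ k =
    \sum_(i < p) (\sum_(k < i) A ^+ k - i%:Z) + ('C(p, 2))%:Z.
  have sum_id : \sum_(i < p) (i : nat)%:Z = ('C(p, 2))%:Z.
    rewrite -bin2_sum big_mkord -[RHS]natz natr_sum.
    by apply: eq_bigr => i _; rewrite natz.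
  by rewrite sumrB sum_id subrK.
rewrite rpredD ?rpred_sum // => [i _|]; first exact: geom_sum_dvd_sub.
by rewrite dvdzE /= prime_dvd_bin // ltnW.
Qed.

Lemma dvdz_fermat (p : nat) (A : int) :
  prime p -> ~~ (p%:Z %| A)%Z -> (p%:Z %| A ^+ p.-1 - 1)%Z.
Proof.
move=> p_pr; rewrite !(dvdz_pcharf (pchar_Fp p_pr)) rmorphB rmorphXn rmorph1 subr_eq0.
move=> A_neq0; apply/eqP/(mulfI A_neq0); rewrite mulr1 -exprS prednK ?prime_gt0 //.
by rewrite -[X in _ ^+ X](card_Fp p_pr) expf_card.
Qed.

Lemma Gauss_dvdz_prime (p : nat) (a b : int) :
  prime p -> ~~ (p%:Z %| a)%Z -> (p%:Z %| a * b)%Z = (p%:Z %| b)%Z.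
Proof. by move=> p_pr pa; rewrite Gauss_dvdzr // coprimezE prime_coprime. Qed.

Lemma geom_sum_dvd_prime (p : nat) (A : int) t : prime p -> (0 < t)%N ->
  (p%:Z %| \sum_(i < t) A ^+ i)%Z ->
  (p%:Z %| \sum_(i < p) A ^+ i)%Z || (p%:Z %| \sum_(i < p.-1) A ^+ i)%Z.
Proof.
move=> p_pr t_gt0 pS; case: (boolP (p%:Z %| A - 1)%Z) => [pA1 | npA1].
  by rewrite dvdz_geom_sum ?dvdzz.
have npA : ~~ (p%:Z %| A)%Z.
  case: t t_gt0 pS => // t _; rewrite geom_sumS; apply: contraL => pA.
  by rewrite rpredDr ?dvdz_mulr // dvdz1 gtn_eqF ?prime_gt1.
by have := dvdz_fermat p_pr npA; rewrite subrX1 Gauss_dvdz_prime // orbC => ->.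
Qed.

Section PadicLifting.

Variables (P : {poly int}) (x : int) (p : nat).
Hypotheses (p_prime : prime p) (p_gt2 : (2 < p)%N).

Local Notation returns := (returns P x).
Local Notation is_least_period := (is_least_period P x).
Local Notation A N := (multiplier P N x).

Let p_neq0 : p%:Z != 0. Proof. by rewrite eqz_nat -lt0n prime_gt0. Qed.

Lemma returns_exact j N : returns (p%:Z ^+ j) N -> ~~ returns (p%:Z ^+ j.+1) N ->
  exists2 u, piter P N x - x = p%:Z ^+ j * u & ~~ (p%:Z %| u)%Z.
Proof.
case/dvdzP=> u defN nretN; exists u; first by rewrite defN mulrC.
apply: contra nretN => /dvdzP[v defu].
by apply/dvdzP; exists v; rewrite defN defu exprSr; ring.
Qed.

Lemma returns_expS j N (u : int) t : (0 < j)%N -> piter P N x - x = p%:Z ^+ j * u ->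
  returns (p%:Z ^+ j.+1) (N * t) = (p%:Z %| u * \sum_(i < t) A N ^+ i)%Z.
Proof.
move=> j_gt0 defN.
have defect : (p%:Z ^+ j.+1 %|
    piter P (N * t) x - x - p%:Z ^+ j * u * \sum_(i < t) A N ^+ i)%Z.
  by apply: dvdz_trans (returns_geom t defN); rewrite -exprM dvdz_exp2l //; lia.
rewrite /returns -(subrK (p%:Z ^+ j * u * \sum_(i < t) A N ^+ i) (piter P _ x - x)).
by rewrite rpredDl // exprSr -mulrA dvdz_mul2l ?expf_neq0.
Qed.

Definition regular j N := [/\ is_least_period (p%:Z ^+ j) N, (2 <= j)%N,
  ~~ returns (p%:Z ^+ j.+1) N & (p%:Z %| A N - 1)%Z].

Definition small j N := (N <= p.-1)%N \/
  [/\ (2 <= j)%N, (p%:Z %| A N - 1)%Z & (N <= p * p.-1)%N].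

Lemma least_period_expS_mulp j N : (0 < j)%N -> is_least_period (p%:Z ^+ j) N ->
  ~~ returns (p%:Z ^+ j.+1) N -> (p%:Z %| A N - 1)%Z ->
  is_least_period (p%:Z ^+ j.+1) (N * p).
Proof.
move=> j_gt0 lpN nretN A1; have [N_gt0 retN _] := lpN.
have [u defN pu] := returns_exact retN nretN.
have retS t : returns (p%:Z ^+ j.+1) (N * t) = (p%:Z %| t%:Z)%Z.
  by rewrite (returns_expS _ j_gt0 defN) Gauss_dvdz_prime // dvdz_geom_sum.
split; [by rewrite muln_gt0 N_gt0 prime_gt0 | by rewrite retS dvdzz |].
move=> M M_gt0 M_lt; apply/negP => retM.
have /dvdnP[t defM] := least_period_dvd lpN (returns_exp_le (leqnSn j) retM).
have t_gt0 : (0 < t)%N by move: M_gt0; rewrite defM muln_gt0 => /andP[].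
rewrite defM mulnC retS dvdzE /= in retM M_lt; rewrite ltn_pmul2l // in M_lt.
by have := dvdn_leq t_gt0 retM; rewrite leqNgt M_lt.
Qed.

Lemma regular_lift j N : regular j N -> regular j.+1 (N * p).
Proof.
case=> lpN j_ge2 nretN A1; have [N_gt0 retN _] := lpN.
have [u defN pu] := returns_exact retN nretN.
set S := \sum_(i < p) A N ^+ i.
have defect : (p%:Z ^+ j.+2 %| piter P (N * p) x - x - p%:Z ^+ j.+1 * u)%Z.
  have -> : piter P (N * p) x - x - p%:Z ^+ j.+1 * u =
      piter P (N * p) x - x - p%:Z ^+ j * u * S + p%:Z ^+ j * u * (S - p%:Z).
    by rewrite exprSr; ring.
  rewrite rpredD //.
    by apply: dvdz_trans (returns_geom p defN); rewrite -exprM dvdz_exp2l //; lia.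
  by rewrite -addn2 exprD dvdz_mul ?dvdz_mulr // geom_sum_prime.
split.
- by apply: least_period_expS_mulp => //; lia.
- exact: leqW.
- apply: contra pu => retNp.
  have : (p%:Z ^+ j.+2 %| p%:Z ^+ j.+1 * u)%Z.
    rewrite [X in (_ %| X)%Z](_ : _ = piter P (N * p) x - x -
      (piter P (N * p) x - x - p%:Z ^+ j.+1 * u)); last by ring.
    exact: rpredB.
  by rewrite [p%:Z ^+ j.+2]exprSr dvdz_mul2l ?expf_neq0.
- have retp : returns p%:Z N by rewrite -[p%:Z]expr1; apply: returns_exp_le retN; lia.
  rewrite -(subrK (A N ^+ p) (A (N * p))) -addrA rpredD ?multiplier_mul //.
  by rewrite subrX1 dvdz_mulr.
Qed.

Lemma regular_liftn j N d : regular j N -> regular (j + d) (N * p ^ d).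
Proof.
move=> regN; elim: d => [|d IH]; first by rewrite addn0 muln1.
by rewrite addnS expnSr mulnA; apply: regular_lift.
Qed.

Lemma short_period_lift j N N' : (0 < j)%N -> is_least_period (p%:Z ^+ j) N ->
  (N <= p.-1)%N -> ~~ returns (p%:Z ^+ j.+1) N -> is_least_period (p%:Z ^+ j.+1) N' ->
  (p%:Z %| A N' - 1)%Z /\ (N' <= p * p.-1)%N.
Proof.
move=> j_gt0 lpN N_le nretN lpN'; have [N_gt0 retN _] := lpN; have [N'_gt0 retN' _] := lpN'.
have [u defN pu] := returns_exact retN nretN.
have retS t : returns (p%:Z ^+ j.+1) (N * t) = (p%:Z %| \sum_(i < t) A N ^+ i)%Z.
  by rewrite (returns_expS _ j_gt0 defN) Gauss_dvdz_prime.
have [t defN'] : exists t, N' = (N * t)%N.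
  by have /dvdnP[t ->] := least_period_dvd lpN (returns_exp_le (leqnSn j) retN');
    exists t; rewrite mulnC.
subst N'; have t_gt0 : (0 < t)%N by move: N'_gt0; rewrite muln_gt0 => /andP[].
rewrite retS in retN'; split.
  have retp : returns p%:Z N := returns_exp_le j_gt0 retN.
  rewrite -(subrK (A N ^+ t) (A (N * t))) -addrA rpredD ?multiplier_mul //.
  by rewrite subrX1 dvdz_mull.
have bound s : (0 < s <= p)%N -> returns (p%:Z ^+ j.+1) (N * s) -> (N * t <= p * p.-1)%N.
  case/andP=> s_gt0 s_le /(least_period_dvd lpN') /dvdn_leq.
  rewrite muln_gt0 N_gt0 s_gt0 => /(_ isT) /leq_trans; apply.
  by rewrite mulnC leq_mul.
by case/orP: (geom_sum_dvd_prime p_prime t_gt0 retN'); rewrite -retS; apply: bound; lia.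
Qed.

Lemma small_or_regular (c : int) j N : P.[c] = c ->
  is_least_period (p%:Z ^+ j.+1) N -> small j.+1 N \/ regular j.+1 N.
Proof.
move=> Pc; elim: j N => [|j IH] N' lpN'.
  by rewrite expr1 in lpN'; left; left; apply: least_period_le_prime Pc p_prime lpN'.
have [N'_gt0 retN' _] := lpN'.
have [N lpN] := least_period_exists N'_gt0 (returns_exp_le (leqnSn _) retN').
have [_ retN _] := lpN.
case: (boolP (returns (p%:Z ^+ j.+2) N)) => [retN1 | nretN1].
  have lpN1 := least_period_lift (dvdz_exp2l _ (leqnSn _)) lpN retN1.
  rewrite -(least_period_unique lpN1 lpN').
  case: (IH N lpN) => [[N_le | [_ A1 N_le]] | [_ _ nretN1 _]].
  - by left; left.
  - by left; right.
  - by rewrite retN1 in nretN1.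
have lpNp : regular j.+1 N -> N' = (N * p)%N.
  by case/regular_lift => lpNp _ _ _; apply: least_period_unique lpN' lpNp.
have [N_le | regN] : (N <= p.-1)%N \/ regular j.+1 N.
  by case: (IH N lpN) => [[|[]]|]; [left | right; split | right].
  by left; right; have [] := short_period_lift (ltn0Sn j) lpN N_le nretN1 lpN'.
by right; rewrite lpNp //; apply: regular_lift.
Qed.

End PadicLifting.

Lemma chebT_horner1 n : (chebT n).[1] = 1.
Proof.
suff : (cheb_pair n).1.[1] = 1 /\ (cheb_pair n).2.[1] = 1 by case.
elim: n => [|n] /=; first by rewrite hornerC hornerX.
by case: (cheb_pair n) => a b /= [a1 b1]; split=> //; rewrite !hornerE b1 a1.
Qed.

Lemma least_period_expE n x p k N :
  least_period n x (p ^ k) N <-> is_least_period (chebT n) x (p%:Z ^+ k) N.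
Proof.
rewrite /least_period /is_least_period /returns -[(p ^ k)%:Z]natz natrX natz.
split=> [[N_gt0 [retN minN]] | [N_gt0 retN minN]].
  by split=> // [|M M_gt0 MN]; rewrite -eqz_mod_dvd //; apply: minN.
by do !split=> //; rewrite ?eqz_mod_dvd // => M M_gt0 MN; rewrite eqz_mod_dvd minN.
Qed.

Theorem corollary1 (p n : nat) (x : nat) (w Nc : nat) :
  prime p -> (3 < p)%N -> (1 < n)%N ->
  coprime n p -> coprime n (p ^ 2 - 1) ->
  (0 < w)%N ->
  least_period n (Posz x) (p ^ w) Nc ->
  (p ^ 2 <= Nc)%N ->
  forall k : nat, (w <= k)%N ->
    least_period n (Posz x) (p ^ k) (Nc * p ^ (k - w)).
Proof.
move=> p_pr p_gt3 _ _ _ w_gt0 /least_period_expE lpw Nc_ge k wk.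
have p_gt2 : (2 < p)%N by apply: ltnW.
have regw : regular (chebT n) x p w Nc.
  case: w w_gt0 lpw {wk} => // w _ lpw.
  rewrite expnS expn1 in Nc_ge.
  have := small_or_regular p_pr p_gt2 (chebT_horner1 n) lpw.
  by case=> // -[Nc_le | [_ _ Nc_le]]; nia.
have [lpk _ _ _] := regular_liftn p_pr p_gt2 (k - w) regw.
by rewrite subnKC // in lpk; apply/least_period_expE.
Qed.
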